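(* Let $(X,d)$, $\mu$, $Y$ (countable), $f:X\to Y$ be as in the standing setting, and let $\kappa:\mathbb{Z}^+\to\mathbb{Z}^+$ satisfy $\sum_{n=1}^\infty\rho^{\kappa(n)}=\infty$ for every $0<\rho\le1$. Let $\{z_n\}$ be generated by $\mathcal{S}(\kappa,\Phi)$ where $\Phi$ is the non-modal count heuristic $\Phi(x,S)=|V_S(x)|-\operatorname{modefreq}_f(V_S(x))$ with $V_S(x)$ the set of Voronoi neighbors of $x$ with respect to $S$. If $x\in X$ is contained in an $f$-contiguous component of positive $\mu$-measure, then $\zeta_n(x)\to f(x)$ with probability one.
   Context: Standing setting: $(X,d)$ metric space with probability measure $\mu$; $Y$ countable; $f:X\to Y$; $X_y=f^{-1}(y)$; $B_\epsilon(x)$ open ball; $\operatorname{supp}(\mu)=\{x:\mu(B_\epsilon(x))>0\ \forall\epsilon>0\}$. A point $b$ is an $f$-boundary point iff $\mu(B_\epsilon(b)\setminus X_{f(b)})>0$ for all $\epsilon>0$. A set $R\subseteq X$ is $f$-connected iff it is connected and $R\subseteq X_y$ for some $y\in Y$; it is $f$-contiguous iff it is $f$-connected, $R\subseteq\operatorname{supp}(\mu)$, and $R$ contains no $f$-boundary points. An $f$-contiguous component is an $f$-contiguous set maximal under inclusion. Voronoi neighbors: $v\in S$ is a Voronoi neighbor of $x$ w.r.t. $S$ iff there is $c\in X$ with $d(x,c)<d(v,c)\le d(s,c)$ for all $s\in S$; $V_S(x)$ is the set of these. For finite $A\subseteq X$, $\operatorname{modefreq}_f(A)=\max_{y\in Y}|A\cap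 X_y|$ (and $0$ if $A=\emptyset$). Process $\mathcal{S}(\kappa,\Phi)$: $Z_0=\emptyset$; at step $n$ draw $\kappa(n)$ candidates i.i.d. from $\mu$, independent of the past, set $z_n$ to a candidate maximizing $\Phi(\cdot,Z_{n-1})$ (ties uniformly at random), $Z_n=\{z_1,\dots,z_n\}$. Nearest neighbor prediction: $\zeta_n(x)=f(z_\iota)$, $\iota=\arg\min_{i\le n}d(x,z_i)$, ties uniformly at random. *)

From HB Require Import structures.
From mathcomp Require Import all_boot all_order all_algebra.
From mathcomp Require Import all_classical all_reals all_analysis.
Set Implicit Arguments. Unset Strict Implicit. Unset Printing Implicit Defensive.
Import Order.TTheory GRing.Theory Num.Theory.
Local Open Scope classical_set_scope.
Local Open Scope ring_scope.

Section Defs.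
Context {R : realType}.

Definition is_metric {X : Type} (d : X -> X -> R) : Prop :=
  [/\ forall x y, 0 <= d x y,
      forall x y, d x y = 0 <-> x = y,
      forall x y, d x y = d y x &
      forall x y z, d x z <= d x y + d y z].

Definition oball {X : Type} (d : X -> X -> R) (x : X) (e : R) : set X :=
  [set y | d x y < e].

Definition dopen {X : Type} (d : X -> X -> R) (U : set X) : Prop :=
  forall x, U x -> exists2 e : R, 0 < e & oball d x e `<=` U.

Definition dconnected {X : Type} (d : X -> X -> R) (A : set X) : Prop :=
  forall U V : set X, dopen d U -> dopen d V ->
    A `<=` U `|` V -> A `&` U `&` V = set0 ->
    A `&` U = set0 \/ A `&` V = set0.

Context {dX : measure_display} {X : measurableType dX}.

Definition supp (mu : probability X R) (d : X -> X -> R) : set X :=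
  [set x | forall e : R, 0 < e -> (0 < mu (oball d x e))%E].

Definition fiber {Y : Type} (f : X -> Y) (y : Y) : set X := f @^-1` [set y].

Definition f_boundary {Y : Type} (mu : probability X R) (d : X -> X -> R)
  (f : X -> Y) (b : X) : Prop :=
  forall e : R, 0 < e -> (0 < mu (oball d b e `\` fiber f (f b)))%E.

Definition f_connected {Y : Type} (d : X -> X -> R) (f : X -> Y) (A : set X) :=
  dconnected d A /\ exists y, A `<=` fiber f y.

Definition f_contiguous {Y : Type} (mu : probability X R) (d : X -> X -> R)
  (f : X -> Y) (A : set X) : Prop :=
  [/\ f_connected d f A, A `<=` supp mu d & forall b, A b -> ~ f_boundary mu d f b].

Definition f_contiguous_component {Y : Type} (mu : probability X R)
  (d : X -> X -> R) (f : X -> Y) (A : set X) : Prop :=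
  f_contiguous mu d f A /\
  forall B, f_contiguous mu d f B -> A `<=` B -> B = A.

(* S is a finite set of points, given as a list *)
Definition voronoi_nb (d : X -> X -> R) (S : seq X) (x v : X) : Prop :=
  v \in S /\ exists c : X, d x c < d v c /\ forall s, s \in S -> d v c <= d s c.

Definition voronoi_set (d : X -> X -> R) (S : seq X) (x : X) : seq X :=
  undup [seq v <- S | `[< voronoi_nb d S x v >] ].

(* modefreq_f(A) for a duplicate-free list A (0 if A is empty) *)
Definition modefreq {Y : eqType} (f : X -> Y) (A : seq X) : nat :=
  \max_(y <- map f A) count (fun v => f v == y) A.

Definition nonmodal_count {Y : eqType} (d : X -> X -> R) (f : X -> Y)
  (x : X) (S : seq X) : nat :=
  (size (voronoi_set d S x) - modefreq f (voronoi_set d S x))%N.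

(* index in [0,k) best for the strict "better" order, earliest index kept
   when not strictly better *)
Definition argbest (better : nat -> nat -> bool) (k : nat) : nat :=
  foldl (fun b j => if better j b then j else b) 0%N (iota 1 k.-1).

Context {dO : measure_display} {Omega : measurableType dO}.

(* cand n j : j-th candidate drawn at step n (n >= 1);
   key n j  : uniform tie-breaking key of that candidate;
   Zs n w   : the list [z_1; ...; z_n]. *)
Fixpoint Zs (Phi : X -> seq X -> nat) (kappa : nat -> nat)
  (cand : nat -> nat -> Omega -> X) (key : nat -> nat -> Omega -> R)
  (n : nat) (w : Omega) : seq X :=
  match n with
  | 0 => [::]
  | n'.+1 =>
      let S := Zs Phi kappa cand key n' w in
      let sc j := Phi (cand n'.+1 j w) S in
      let better j b := (sc b < sc j)%N || ((sc j == sc b) && (key n'.+1 j w < key n'.+1 b w)) in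
      rcons S (cand n'.+1 (argbest better (kappa n'.+1)) w)
  end.

(* nearest-neighbour prediction zeta_n(x), ties broken by the uniform keys
   nkey n i (the smallest key among the nearest z_i wins) *)
Definition zeta {Y : Type} (d : X -> X -> R) (f : X -> Y)
  (Phi : X -> seq X -> nat) (kappa : nat -> nat)
  (cand : nat -> nat -> Omega -> X) (key : nat -> nat -> Omega -> R)
  (nkey : nat -> nat -> Omega -> R) (n : nat) (x : X) (w : Omega) : Y :=
  let Z := Zs Phi kappa cand key n w in
  let z i := nth point Z i in
  let better i b := (d x (z i) < d x (z b)) ||
                    ((d x (z i) == d x (z b)) && (nkey n i w < nkey n b w)) in
  f (z (argbest better n)).

Definition mutually_independent (P : probability Omega R) {I : eqType}
  (F : I -> set (set Omega)) : Prop :=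
  forall (J : seq I) (A : I -> set Omega), uniq J ->
    (forall i, i \in J -> F i (A i)) ->
    P (\bigcap_(i in [set` J]) A i) = \big[*%E/1%E]_(i <- J) P (A i).

Definition rv_sigma {dT} {T : measurableType dT} (Z : Omega -> T) : set (set Omega) :=
  [set Z @^-1` A | A in [set A : set T | measurable A]].

Definition proc_index := ((nat * nat) + ((nat * nat) + (nat * nat)))%type.

Definition proc_sigma (cand : nat -> nat -> Omega -> X)
  (key nkey : nat -> nat -> Omega -> R) (i : proc_index) : set (set Omega) :=
  match i with
  | inl (n, j) => rv_sigma (cand n j)
  | inr (inl (n, j)) => rv_sigma (key n j)
  | inr (inr (n, j)) => rv_sigma (nkey n j)
  end.

End Defs.

From HB Require Import structures.
From mathcomp Require Import all_boot all_order all_algebra.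
From mathcomp Require Import all_classical all_reals all_analysis.
From mathcomp Require Import ring lra.
Import Order.TTheory GRing.Theory Num.Theory.
Local Open Scope classical_set_scope.
Local Open Scope ring_scope.

(* Since x lies in supp mu but is not an f-boundary point, some ball B around
   x has mu B = rho > 0 while B \ X_f(x) is mu-null.  Almost surely no candidate
   ever falls in B \ X_f(x), and almost surely some step n draws all of its
   kappa(n) candidates in B: these events are independent with probabilities
   rho^kappa(n), so none of them occurs with probability at most
   prod (1 - rho^kappa(n)) <= 1 / (1 + sum rho^kappa(n)) = 0.  Whatever the
   heuristic, z_n is then in B, so for every later m the nearest neighbour of x
   in Z_m is in B, hence in X_f(x). *)

Section Argbest.
Variable better : nat -> nat -> bool.

Lemma foldl_argbest_mem b0 s :
  foldl (fun b j => if better j b then j else b) b0 s \in b0 :: s.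
Proof.
elim: s b0 => [|a s IH] b0 /=; first exact: mem_head.
have := IH (if better a b0 then a else b0).
by case: ifP => _; rewrite !inE => /predU1P[->|->]; rewrite ?eqxx ?orbT.
Qed.

Lemma argbest_lt k : (0 < k)%N -> (argbest better k < k)%N.
Proof.
case: k => // k _; have := foldl_argbest_mem 0 (iota 1 k).
by rewrite -/(argbest better k.+1) inE mem_iota add1n => /predU1P[->|/andP[]].
Qed.

Context {disp : Order.disp_t} {T : porderType disp}.
Variable score : nat -> T.
Hypothesis better_le : forall j b, better j b -> (score j <= score b)%O.
Hypothesis not_better_ge : forall j b, ~~ better j b -> (score b <= score j)%O.

Lemma foldl_argbest_min b0 s i : i \in b0 :: s ->
  (score (foldl (fun b j => if better j b then j else b) b0 s) <= score i)%O.
Proof.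
elim: s b0 i => [|a s IH] b0 i /=; first by rewrite inE => /eqP->.
set b1 := if better a b0 then a else b0.
have [le_b0 le_a] : (score b1 <= score b0)%O /\ (score b1 <= score a)%O.
  rewrite /b1; case: ifP => h; split => //; first exact: better_le.
  by apply: not_better_ge; rewrite h.
have le_b1 := IH b1 b1 (mem_head _ _).
rewrite !inE => /or3P[/eqP->|/eqP->|i_s]; first exact: le_trans le_b1 le_b0.
  exact: le_trans le_b1 le_a.
by apply: IH; rewrite inE i_s orbT.
Qed.

Lemma argbest_min k i : (i < k)%N -> (score (argbest better k) <= score i)%O.
Proof.
move=> i_k; apply: foldl_argbest_min; case: i i_k => [|i] i_k; first exact: mem_head.
by rewrite inE mem_iota add1n prednK // (leq_ltn_trans _ i_k).
Qed.

End Argbest.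

Section Process.
Context {R : realType} {dX : measure_display} {X : measurableType dX}
  {dO : measure_display} {Omega : measurableType dO}.
Variables (Phi : X -> seq X -> nat) (kappa : nat -> nat)
  (cand : nat -> nat -> Omega -> X) (key : nat -> nat -> Omega -> R) (w : Omega).
Local Notation Z n := (Zs Phi kappa cand key n w).

Lemma size_Zs n : size (Z n) = n.
Proof. by elim: n => //= n IH; rewrite size_rcons IH. Qed.

Lemma nth_Zs i n m : (i < n <= m)%N -> nth point (Z m) i = nth point (Z n) i.
Proof.
case/andP=> i_n; elim: m => [|m IH]; first by rewrite leqn0 => /eqP->.
rewrite leq_eqVlt ltnS => /predU1P[->//|n_m].
by rewrite /= nth_rcons size_Zs (leq_trans i_n n_m) IH.
Qed.

Lemma nth_Zs_last n : (0 < kappa n.+1)%N ->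
  exists2 j, (j < kappa n.+1)%N & nth point (Z n.+1) n = cand n.+1 j w.
Proof.
move=> kappa_gt0; rewrite /= nth_rcons size_Zs ltnn eqxx.
by eexists; [|reflexivity]; exact: argbest_lt.
Qed.

Lemma mem_Zs n z : z \in Z n -> exists m j, z = cand m j w.
Proof.
elim: n => //= n IH; rewrite mem_rcons inE => /predU1P[->|/IH//].
by do 2!eexists.
Qed.

End Process.

Lemma zeta_eq_of_candidates_in_ball {R : realType} {dX : measure_display}
    {X : measurableType dX} {dO : measure_display} {Omega : measurableType dO}
    {Y : Type} (d : X -> X -> R) (f : X -> Y) (Phi : X -> seq X -> nat)
    (kappa : nat -> nat) (cand : nat -> nat -> Omega -> X)
    (key nkey : nat -> nat -> Omega -> R) (x : X) (e : R) (w : Omega) n :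
  (forall m j, oball d x e (cand m j w) -> f (cand m j w) = f x) ->
  (0 < kappa n.+1)%N ->
  (forall j, (j < kappa n.+1)%N -> oball d x e (cand n.+1 j w)) ->
  forall m, (n < m)%N -> zeta d f Phi kappa cand key nkey m x w = f x.
Proof.
move=> ball_fx kappa_gt0 step_in_ball m n_m; rewrite /zeta /=.
set Z := Zs _ _ _ _ m w; set b := argbest _ m.
have Zn_in_ball : oball d x e (nth point Z n).
  rewrite /Z (nth_Zs _ _ _ _ _ _ n.+1) ?ltnSn //.
  have [j j_lt ->] := nth_Zs_last Phi kappa cand key w _ kappa_gt0.
  exact: step_in_ball.
have le_b_n : d x (nth point Z b) <= d x (nth point Z n).
  apply: (argbest_min _ (fun i => d x (nth point Z i))) => [j i|j i|//].
  - by case/orP=> [/ltW //|/andP[/eqP-> _]].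
  - by rewrite negb_or => /andP[+ _]; rewrite -leNgt.
have : nth point Z b \in Z.
  by rewrite mem_nth // size_Zs argbest_lt // (leq_ltn_trans _ n_m).
case/mem_Zs => m' [j Zb]; rewrite Zb; apply: ball_fx; rewrite -Zb.
exact: le_lt_trans le_b_n Zn_in_ball.
Qed.

Lemma dopen_oball {R : realType} {X : Type} (d : X -> X -> R) x e :
  is_metric d -> dopen d (oball d x e).
Proof.
case=> _ _ _ triangle y xy_lt; exists (e - d x y); first by rewrite subr_gt0.
by move=> z yz_lt; have := triangle x y z; rewrite /oball /= in xy_lt yz_lt *; lra.
Qed.

Lemma not_f_boundary_null_ball {R : realType} {dX : measure_display}
    {X : measurableType dX} {Y : Type} (mu : probability X R)
    (d : X -> X -> R) (f : X -> Y) b :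
  ~ f_boundary mu d f b ->
  exists2 e, 0 < e & mu (oball d b e `\` fiber f (f b)) = 0%E.
Proof.
move=> /existsNP[e /not_implyP[e_gt0 /negP]]; rewrite -leNgt => le0.
by exists e => //; apply/eqP; rewrite eq_le le0 measure_ge0.
Qed.

Section ProductOfComplements.
Context {R : realType}.
Variable a : nat -> R.
Hypothesis a01 : forall i, 0 <= a i <= 1.

Lemma prod_1sub_mul_1add_sum_le1 K :
  (\prod_(i < K) (1 - a i)) * (1 + \sum_(i < K) a i) <= 1.
Proof.
elim: K => [|K IH]; first by rewrite !big_ord0 addr0 mulr1.
rewrite !big_ord_recr /=.
set p := \prod_(i < K) _ in IH *; set s := \sum_(i < K) _ in IH *.
have p_ge0 : 0 <= p by apply: prodr_ge0 => i _; have /andP[_] := a01 i; rewrite subr_ge0.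
have s_ge0 : 0 <= s by apply: sumr_ge0 => i _; have /andP[] := a01 i.
have /andP[aK_ge0 aK_le1] := a01 K.
have : 0 <= p * (a K * s + a K ^+ 2) by rewrite mulr_ge0 ?addr_ge0 ?mulr_ge0 ?sqr_ge0.
nra.
Qed.

Lemma prod_1sub_cvg0 : (fun N => \sum_(i < N) a i) @ \oo --> +oo ->
  (fun N => \prod_(i < N) (1 - a i)) @ \oo --> 0.
Proof.
move=> sum_oo.
have sum1_oo : (fun N => 1 + \sum_(i < N) a i) @ \oo --> +oo.
  by apply: ger_cvgy sum_oo; apply: nearW => N; rewrite lerDr.
have sum1_gt0 N : 0 < 1 + \sum_(i < N) a i.
  by rewrite ltr_pwDl // sumr_ge0 // => i _; have /andP[] := a01 i.
have inv_cvg0 : (1 + \sum_(i < N) a i)^-1 @[N --> \oo] --> 0.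
  by apply/gtr0_cvgV0 => //; exact: nearW.
have bounds N : 0 <= \prod_(i < N) (1 - a i) <= (1 + \sum_(i < N) a i)^-1.
  apply/andP; split.
    by apply: prodr_ge0 => i _; have /andP[_] := a01 i; rewrite subr_ge0.
  by rewrite -div1r ler_pdivlMr ?prod_1sub_mul_1add_sum_le1.
apply: (@squeeze_cvgr _ _ _ _ (cst 0) (fun N => (1 + \sum_(i < N) a i)^-1)) => //.
  exact: nearW.
exact: (@cvg_cst R^o 0 nat \oo _).
Qed.

End ProductOfComplements.

Section IndependentComplements.
Context {R : realType} {d : measure_display} {T : measurableType d} {I : choiceType}.
Variables (P : probability T R) (E : I -> set T) (p : I -> R).
Hypothesis mE : forall i, measurable (E i).
Hypothesis indepE : forall J, uniq J ->
  P (\bigcap_(i in [set` J]) E i) = (\prod_(i <- J) p i)%:E.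

Lemma indep_setC J : uniq J ->
  P (\bigcap_(i in [set` J]) ~` E i) = (\prod_(i <- J) (1 - p i))%:E.
Proof.
suff mixed K : uniq (K ++ J) ->
    P (\big[setI/setT]_(i <- K) E i `&` \big[setI/setT]_(i <- J) ~` E i) =
    (\prod_(i <- K) p i * \prod_(i <- J) (1 - p i))%:E.
  by move=> uJ; have := mixed [::] uJ; rewrite !big_nil setTI mul1r bigcap_seq.
elim: J K => [|a J IH] K uKaJ.
  by rewrite !big_nil setIT mulr1 -bigcap_seq indepE // -(cats0 K).
have uaKJ : uniq ((a :: K) ++ J).
  by rewrite -(perm_uniq (introT permPl (perm_catCA K [:: a] J))).
have uKJ : uniq (K ++ J) by move: uaKJ => /= /andP[].
have mK : measurable (\big[setI/setT]_(i <- K) E i) by exact: bigsetI_measurable.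
have mJ : measurable (\big[setI/setT]_(i <- J) ~` E i).
  by apply: bigsetI_measurable => i _; exact: measurableC.
set A := \big[setI/setT]_(i <- K) E i `&` \big[setI/setT]_(i <- J) ~` E i.
have -> : \big[setI/setT]_(i <- K) E i `&` \big[setI/setT]_(i <- a :: J) ~` E i = A `\` E a.
  by rewrite /A big_cons setDE setIAC setIA.
have mA : measurable A by exact: measurableI.
transitivity (P A - P (A `&` E a))%E.
  by apply: measureD => //; exact: le_lt_trans (probability_le1 P mA) (ltey _).
have -> : A `&` E a = \big[setI/setT]_(i <- a :: K) E i `&` \big[setI/setT]_(i <- J) ~` E i.
  by rewrite /A big_cons setIAC (setIC (\big[setI/setT]_(i <- K) E i)).
rewrite !IH // -EFinB !big_cons; congr EFin; ring.
Qed.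

End IndependentComplements.

Section CandidatesWithin.
Context {R : realType} {dX : measure_display} {X : measurableType dX}
  {dO : measure_display} {Omega : measurableType dO}.
Variables (P : probability Omega R) (cand : nat -> nat -> Omega -> X)
  (key nkey : nat -> nat -> Omega -> R) (kappa : nat -> nat) (B : set X) (rho : R).
Hypothesis mB : measurable B.
Hypothesis mcand : forall n j, measurable_fun setT (cand n j).
Hypothesis P_cand_B : forall n j, P (cand n j @^-1` B) = rho%:E.
Hypothesis indep : mutually_independent P (proc_sigma cand key nkey).

Definition candidates_within n : set Omega :=
  \bigcap_(j in [set` iota 0 (kappa n)]) cand n j @^-1` B.

Lemma measurable_candidates_within n : measurable (candidates_within n).
Proof.
rewrite /candidates_within bigcap_seq; apply: bigsetI_measurable => j _.
by rewrite -[_ @^-1` _]setTI; exact: mcand.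
Qed.

Lemma candidates_within_indep L : uniq L ->
  P (\bigcap_(n in [set` L]) candidates_within n) = (\prod_(n <- L) rho ^+ kappa n)%:E.
Proof.
move=> uL.
pose A (i : proc_index) := if i is inl (n, j) then cand n j @^-1` B else setT.
pose J := [seq inl (n, j) : proc_index | n <- L, j <- iota 0 (kappa n)].
have -> : \bigcap_(n in [set` L]) candidates_within n = \bigcap_(i in [set` J]) A i.
  rewrite !bigcap_seq big_allpairs_dep; apply: eq_bigr => n _.
  by rewrite /candidates_within bigcap_seq.
rewrite indep.
- rewrite big_allpairs_dep /= -prodEFin; apply: eq_bigr => n _.
  rewrite (eq_bigr (fun _ => rho%:E)) ?prodEFin; last by move=> j _; exact: P_cand_B.
  rewrite (_ : iota 0 _ = index_iota 0 (kappa n)) ?prodr_const_nat ?subn0 //.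
  by rewrite /index_iota subn0.
- apply: allpairs_uniq_dep => // [n _|]; first exact: iota_uniq.
  by move=> [n j] [n' j'] _ _ [-> ->].
- by move=> _ /allpairsPdep[n [j [_ _ ->]]]; exists B.
Qed.

Lemma never_candidates_within_negligible : 0 < rho <= 1 ->
  (fun N => \sum_(n < N) rho ^+ kappa n.+1) @ \oo --> +oo ->
  P.-negligible (\bigcap_n ~` candidates_within n.+1).
Proof.
move=> /andP[rho_gt0 rho_le1] sum_oo.
have powers01 i : 0 <= rho ^+ kappa i.+1 <= 1.
  by rewrite exprn_ge0 ?exprn_ile1 ?(ltW rho_gt0).
set E := \bigcap_n ~` candidates_within n.+1.
have mE : measurable E.
  by apply: bigcapT_measurable => n; exact/measurableC/measurable_candidates_within.
have le_prod (K : nat) : (P E <= (\prod_(i < K) (1 - rho ^+ kappa i.+1))%:E)%E.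
  have mF : measurable (\bigcap_(n in [set` index_iota 1 K.+1]) ~` candidates_within n).
    rewrite bigcap_seq; apply: bigsetI_measurable => n _.
    exact/measurableC/measurable_candidates_within.
  have -> : \prod_(i < K) (1 - rho ^+ kappa i.+1) =
      \prod_(1 <= n < K.+1) (1 - rho ^+ kappa n).
    by rewrite big_add1 big_mkord.
  rewrite -(indep_setC P candidates_within (fun n => rho ^+ kappa n)) ?iota_uniq //.
  - apply: le_measure; rewrite ?inE // => w Ew n /=.
    by rewrite mem_index_iota; case: n => // n _; exact: Ew.
  - exact: measurable_candidates_within.
  - exact: candidates_within_indep.
suff PE_le0 : (P E <= 0)%E.
  by apply/negligibleP => //; apply/eqP; rewrite eq_le measure_ge0 andbT; exact: PE_le0.
rewrite -[P E]fineK ?fin_num_measure // lee_fin.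
have prod_cvg0 := prod_1sub_cvg0 _ powers01 sum_oo.
rewrite -(cvg_lim _ prod_cvg0) //; apply: limr_ge; first exact: cvgP prod_cvg0.
by apply: nearW => K; rewrite -lee_fin fineK ?fin_num_measure.
Qed.

End CandidatesWithin.

Theorem theorem3 (R : realType)
  (dX : measure_display) (X : measurableType dX) (d : X -> X -> R)
  (mu : probability X R) (Y : countType) (f : X -> Y)
  (kappa : nat -> nat)
  (dO : measure_display) (Omega : measurableType dO) (P : probability Omega R)
  (cand : nat -> nat -> Omega -> X) (key nkey : nat -> nat -> Omega -> R) :
  (* (X,d) is a metric space whose measurable sets are its Borel sets *)
  is_metric d ->
  (@measurable _ X = <<s dopen d >>) ->
  (* the level sets X_y are measurable (so mu(B \ X_y) makes sense) *)
  (forall y, measurable (fiber f y)) ->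
  (* kappa : Z+ -> Z+ with sum_n rho^kappa(n) = +oo for all 0 < rho <= 1 *)
  (forall n, (0 < n)%N -> (0 < kappa n)%N) ->
  (forall rho : R, 0 < rho <= 1 ->
     (fun N : nat => \sum_(n < N) rho ^+ kappa n.+1) @ \oo --> +oo) ->
  (* candidates are i.i.d. mu, tie-breaking keys are i.i.d. uniform on [0,1],
     and all of them are mutually independent *)
  (forall n j, measurable_fun setT (cand n j)) ->
  (forall n j, measurable_fun setT (key n j)) ->
  (forall n j, measurable_fun setT (nkey n j)) ->
  (forall n j A, measurable A -> P (cand n j @^-1` A) = mu A) ->
  (forall n j (A : set R), measurable A ->
     P (key n j @^-1` A) = lebesgue_measure (A `&` `[0, 1])) ->
  (forall n j (A : set R), measurable A ->
     P (nkey n j @^-1` A) = lebesgue_measure (A `&` `[0, 1])) ->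
  mutually_independent P (proc_sigma cand key nkey) ->
  forall x : X,
    (exists C : set X, [/\ f_contiguous_component mu d f C, C x,
                           measurable C & (0 < mu C)%E]) ->
    {ae P, forall w, exists N, forall n, (N <= n)%N ->
       zeta d f (nonmodal_count d f) kappa cand key nkey n x w = f x}.
Proof.
move=> d_metric borel mfiber kappa_gt0 sum_oo mcand _ _ law_cand _ _ indep x.
case=> C [[[_ C_supp C_no_boundary] _] Cx _ _].
have [e e_gt0 mu_ball_off] := not_f_boundary_null_ball _ _ _ _ (C_no_boundary x Cx).
pose B := oball d x e.
have mB : measurable B.
  by rewrite borel; apply: sub_sigma_algebra; exact: dopen_oball.
pose rho := fine (mu B).
have mu_B : mu B = rho%:E by rewrite fineK ?fin_num_measure.
have rho01 : 0 < rho <= 1.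
  by rewrite -!lte_fin -lee_fin -mu_B probability_le1 ?(C_supp x Cx).
have P_cand_B n j : P (cand n j @^-1` B) = rho%:E by rewrite law_cand.
have off_null : P.-negligible
    (\bigcup_m \bigcup_j cand m j @^-1` (B `\` fiber f (f x))).
  apply: negligible_bigcup => m; apply: negligible_bigcup => j.
  have m_off : measurable (B `\` fiber f (f x)) by exact: measurableD.
  apply/negligibleP; first by rewrite -[_ @^-1` _]setTI; exact: mcand.
  by apply: eq_trans (law_cand _ _ _ m_off) mu_ball_off.
have never_null := never_candidates_within_negligible _ _ _ _ _ _ _ mB mcand
  P_cand_B indep rho01 (sum_oo rho rho01).
apply: negligibleS (negligibleU off_null never_null) => w /= not_eventually.
apply: contrapT => /not_orP[off_w /existsNP[n /not_implyP[_ /contrapT within_n]]].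
apply: not_eventually; exists n.+1 => m.
apply: (zeta_eq_of_candidates_in_ball _ _ _ _ _ _ _ _ e) => //.
- move=> m' j B_c; apply: contrapT => f_ne; apply: off_w.
  by exists m' => //; exists j.
- by apply: kappa_gt0.
- by move=> j j_lt; apply: within_n; rewrite /= mem_iota.
Qed.
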